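(* Let $\mathcal{P} \subseteq \{2,3,4,\dots\}$ be nonempty, let $\varrho$ be the minimal element of $\mathcal{P}$, and let $s \geq 0$ be real with $s>\sigma_\mathcal{P}$. Then for all integers $n\geq 2$ and $k \geq 1$, $$H_k(n,\mathcal{P}) \leq \frac{\zeta_\mathcal{P}(s)^{k-1}\, n^s}{\varrho^s}.$$
   Context: For $\mathcal{P} \subseteq \{2,3,\dots\}$ and $k\ge1$, $H_k(n,\mathcal{P})$ is the number of ordered $k$-tuples $(d_1,\dots,d_k)$ with $d_1\cdots d_k = n$ and every $d_i \in \mathcal{P}$ (so $H_1(n,\mathcal{P})=1$ if $n\in\mathcal{P}$ and $0$ otherwise). $\zeta_\mathcal{P}(s)=\sum_{m\in\mathcal{P}} m^{-s}$, and $\sigma_\mathcal{P}$ is its abscissa of convergence ($-\infty$ if $\mathcal{P}$ is finite). *)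

From HB Require Import structures.
From mathcomp Require Import all_boot all_order all_algebra.
From mathcomp Require Import all_classical all_reals all_analysis.
Set Implicit Arguments. Unset Strict Implicit. Unset Printing Implicit Defensive.
Import Order.TTheory GRing.Theory Num.Theory.
Import numFieldNormedType.Exports.
Local Open Scope ring_scope.

(* H_k(n,P): number of ordered k-tuples (d_1,...,d_k) of naturals with
   d_1 * ... * d_k = n and every d_i in P.  For n >= 1 every d_i divides n,
   hence d_i <= n, so tuples over 'I_n.+1 enumerate all of them. *)
Definition Hk (P : pred nat) (k n : nat) : nat :=
  #|[set t : k.-tuple 'I_n.+1 |
       ((\prod_(i <- t) (nat_of_ord i))%N == n) && all (fun i : 'I_n.+1 => P i) t]|.

Definition zetaP_term {R : realType} (P : pred nat) (s : R) (m : nat) : R :=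
  if P m then (m%:R : R) `^ (- s) else 0.

Definition zetaP {R : realType} (P : pred nat) (s : R) : R :=
  limn (series (zetaP_term P s) : R^nat).

Definition sigmaP {R : realType} (P : pred nat) : \bar R :=
  ereal_inf [set (t%:E : \bar R) | t in [set t : R | cvgn (series (zetaP_term P t) : R^nat)]].

From HB Require Import structures.
From mathcomp Require Import all_boot all_order all_algebra.
From mathcomp Require Import all_classical all_reals all_analysis.
Set Implicit Arguments.
Unset Strict Implicit.
Unset Printing Implicit Defensive.
Import Order.TTheory GRing.Theory Num.Theory.
Import numFieldNormedType.Exports.
Local Open Scope ring_scope.

(* Counting tuples whose factors are at most N, splitting off the first factor d
   gives H_(k+1)(m) = sum_(d in P, d | m) H_k(m/d), and H_1(m) <= [m in P] <= (m/rho)^s.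
   Since (m/d)^s = m^s d^-s, induction on k yields H_(k+1)(m) <= Z^k (m/rho)^s with
   Z = sum_(d <= N) d^-s, a partial sum of zeta_P(s); for N = n this is at most
   zeta_P(s), the series converging by comparison with zeta_P(t) for sigma_P < t < s. *)

Section TupleCount.
Local Open Scope nat_scope.
Variable P : pred nat.

Definition tuple_count (N k m : nat) : nat :=
  \sum_(t : k.-tuple 'I_N.+1)
    ((\prod_(i <- t) i == m) && all (fun i : 'I_N.+1 => P i) t).

Lemma Hk_tuple_count k n : Hk P k n = tuple_count n k n.
Proof.
rewrite /Hk -sum1_card big_mkcond /=.
by apply: eq_bigr => t _; rewrite inE; case: ifP.
Qed.

Lemma sum_tuple0 (T : finType) (F : 0.-tuple T -> nat) : \sum_t F t = F [tuple].
Proof. by rewrite (big_pred1 [tuple]) // => t; rewrite [t]tuple0 /= eqxx. Qed.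

Lemma tuple_count0 N m : tuple_count N 0 m = (m == 1).
Proof. by rewrite /tuple_count sum_tuple0 /= big_nil andbT eq_sym. Qed.

Lemma tuple_count_cons N k m :
  tuple_count N k.+1 m =
  \sum_(x < N.+1) \sum_(t : k.-tuple 'I_N.+1)
     [&& x * \prod_(i <- t) i == m, P x & all (fun i : 'I_N.+1 => P i) t].
Proof.
rewrite /tuple_count (reindex (fun p : 'I_N.+1 * k.-tuple 'I_N.+1 => [tuple of p.1 :: p.2])) /=; last first.
  exists (fun t => (thead t, [tuple of behead t])) => [[x t] _ | t _] /=.
    by congr pair; apply: val_inj.
  by rewrite -tuple_eta.
by rewrite pair_big; apply: eq_bigr => -[x t] _; rewrite big_cons.
Qed.

Lemma tuple_count1 N m : tuple_count N 1 m = P m && (m <= N).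
Proof.
rewrite tuple_count_cons.
rewrite (eq_bigr (fun x : 'I_N.+1 => if P x && (x == m :> nat) then 1 else 0)) => [|x _].
  by rewrite -big_mkcond (big_ord1_cond_eq _ (fun=> 1)) ltnS andbC; case: (_ && _).
by rewrite sum_tuple0 big_nil muln1 andbT andbC; case: (_ && _).
Qed.

Lemma tuple_countS N k m : (forall x, P x -> 0 < x) ->
  tuple_count N k.+1 m = \sum_(x < N.+1 | P x && (x %| m)) tuple_count N k (m %/ x).
Proof.
move=> P_gt0; rewrite tuple_count_cons [RHS]big_mkcond; apply: eq_bigr => x _.
case: (boolP (P x)) => Px /=; last by rewrite big1 // => t _; rewrite andbF.
case: (boolP (x %| m)) => xm; last first.
  by rewrite big1 // => t _; case: eqP => // xt_m; rewrite -xt_m dvdn_mulr in xm.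
apply: eq_bigr => t _.
by rewrite -{1}(divnK xm) mulnC eqn_pmul2r ?P_gt0.
Qed.

End TupleCount.

Lemma zetaP_term_ge0 (R : realType) (P : pred nat) (s : R) m : 0 <= zetaP_term P s m.
Proof. by rewrite /zetaP_term; case: ifP => // _; apply: powR_ge0. Qed.

Lemma powR_natr_divn (R : realType) (s : R) x m : (0 < x)%N -> (x %| m)%N ->
  (m %/ x)%:R `^ s = m%:R `^ s * x%:R `^ (- s).
Proof.
move=> x_gt0 xm.
by rewrite -{2}(divnK xm) natrM powRM ?ler0n // powRN mulfK // gt_eqF // powR_gt0 // ltr0n.
Qed.

Section TupleCountBound.
Variables (R : realType) (P : pred nat) (s : R) (rho N : nat).
Hypotheses (s_ge0 : 0 <= s) (rho_gt0 : (0 < rho)%N)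
  (rho_min : forall m, P m -> (rho <= m)%N).

Let P_gt0 m : P m -> (0 < m)%N.
Proof. by move/rho_min; apply: leq_trans. Qed.

Let Z := \sum_(x < N.+1) zetaP_term P s x.

Lemma tuple_count_le k m : (0 < m)%N ->
  (tuple_count P N k.+1 m)%:R <= Z ^+ k * m%:R `^ s / rho%:R `^ s.
Proof.
have rho_s_gt0 : 0 < rho%:R `^ s :> R by rewrite powR_gt0 // ltr0n.
have Z_ge0 : 0 <= Z by apply: sumr_ge0 => x _; apply: zetaP_term_ge0.
elim: k m => [|k IH] m m_gt0.
  rewrite tuple_count1 expr0 mul1r; case Pm: (P m) => /=; last first.
    by rewrite divr_ge0 ?powR_ge0.
  apply: le_trans (_ : 1 <= _); first by rewrite lern1 leq_b1.
  by rewrite ler_pdivlMr // mul1r ge0_ler_powR ?nnegrE ?ler0n // ler_nat rho_min.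
rewrite tuple_countS // natr_sum big_mkcond /=.
apply: le_trans (_ : \sum_(x < N.+1) Z ^+ k * m%:R `^ s / rho%:R `^ s * zetaP_term P s x <= _).
  apply: ler_sum => x _; case: ifP => [/andP[Px xm] | _]; last first.
    by rewrite mulr_ge0 ?divr_ge0 ?mulr_ge0 ?exprn_ge0 ?powR_ge0 ?zetaP_term_ge0.
  have mx_gt0 : (0 < m %/ x)%N by rewrite divn_gt0 ?P_gt0 // dvdn_leq.
  apply: le_trans (IH _ mx_gt0) _.
  by rewrite powR_natr_divn ?P_gt0 // /zetaP_term Px mulrA mulrAC lexx.
by rewrite -mulr_sumr -/Z exprSr [leLHS]mulrAC (mulrAC (Z ^+ k)).
Qed.

End TupleCountBound.

Lemma zetaP_cvg (R : realType) (P : pred nat) (s : R) :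
  (forall m, P m -> (0 < m)%N) -> (sigmaP P < s%:E)%E ->
  cvgn (series (zetaP_term P s) : R^nat).
Proof.
move=> P_gt0 /ereal_inf_lt[_ [t t_cvg <-]]; rewrite lte_fin => t_lt_s.
apply: series_le_cvg t_cvg => [m|m|m]; rewrite ?zetaP_term_ge0 // /zetaP_term.
case: ifP => // Pm; apply: ler_powR; last by rewrite lerN2 ltW.
by rewrite ler1n P_gt0.
Qed.

Lemma zetaP_partial_le (R : realType) (P : pred nat) (s : R) N :
  cvgn (series (zetaP_term P s) : R^nat) ->
  \sum_(x < N) zetaP_term P s x <= zetaP P s.
Proof.
move=> zeta_cvg; rewrite -(big_mkord xpredT).
apply: (nondecreasing_cvgn_le _ zeta_cvg N).
by apply: (@nondecreasing_series _ _ xpredT 0) => n _ _; apply: zetaP_term_ge0.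
Qed.

Theorem lemma2p2 (R : realType) (P : pred nat) (rho : nat) (s : R) :
  (forall m, P m -> (2 <= m)%N) ->
  P rho -> (forall m, P m -> (rho <= m)%N) ->
  0 <= s -> (sigmaP P < s%:E)%E ->
  forall n k : nat, (2 <= n)%N -> (1 <= k)%N ->
  ((Hk P k n)%:R : R) <= zetaP P s ^+ (k - 1) * (n%:R `^ s) / (rho%:R `^ s).
Proof.
move=> P_ge2 P_rho rho_min s_ge0 sigma_lt_s n [|k] n_ge2 // _.
have P_gt0 m : P m -> (0 < m)%N by move/P_ge2; apply: leq_trans.
have zeta_cvg := zetaP_cvg P_gt0 sigma_lt_s.
set Z := \sum_(x < n.+1) zetaP_term P s x.
have Z_ge0 : 0 <= Z by apply: sumr_ge0 => x _; apply: zetaP_term_ge0.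
have Z_le_zeta : Z <= zetaP P s by apply: zetaP_partial_le.
rewrite subn1 /= Hk_tuple_count.
apply: le_trans (tuple_count_le n s_ge0 (P_gt0 _ P_rho) rho_min k (ltnW n_ge2)) _.
rewrite ler_wpM2r ?invr_ge0 ?powR_ge0 // ler_wpM2r ?powR_ge0 // -/Z.
by apply: lerXn2r; rewrite // nnegrE // (le_trans Z_ge0).
Qed.
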